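(* Let $N\ge 2$ and let $c_2,\dots,c_N>0$ be real numbers; set $c_1=1$ and let $\Lambda_{\mathbf c}=\mathbb{Z}\oplus c_2\mathbb{Z}\oplus\cdots\oplus c_N\mathbb{Z}\subset\mathbb{R}^N$. Let $\Lambda\subset\mathbb{R}^{N-1}$ be a full-rank lattice, and let $L^*=(l^*_{ij})_{1\le i,j\le N-1}$ be a lower triangular generator matrix (rows are basis vectors) of the dual lattice $\Lambda^*$. For $w\in\mathbb{N}$ let $L_w^*$ be the $(N-1)\times N$ real matrix with entries $$(L_w^* )_{ij}=\frac{\lfloor w\,c_j\,l^*_{ij}\rfloor}{c_j}\ \ (1\le j\le i),\qquad (L_w^* )_{i,i+1}=\frac{1}{c_{i+1}},\qquad (L_w^* )_{ij}=0\ \ (j\ge i+2),$$ for $i=1,\dots,N-1$, and let $\Lambda_w^*$ be the lattice generated by its rows. Then: (i) for each $w$ there exist integers $u_2,\dots,u_N$ such that, with $\hat{\mathbf u}=(1,u_2c_2,\dots,u_Nc_N)$, the lattice $\Lambda_w^*$ equals the dual lattice $\big(P_{\hat{\mathbf u}^\perp}(\Lambda_{\mathbf c})\big)^*$ of the orthogonal projection of $\Lambda_{\mathbf c}$ onto the hyperplane $\hat{\mathbf u}^\perp$; equivalently, $\Lambda_w^*$ is also generated by the rows of the matrix whose $(i-1)$-th row is $-u_i\mathbf e_1+\frac{1}{c_i}\mathbf e_i$, $i=2,\dots,N$ (with $\mathbf e_k$ the standard basis of $\mathbb{R}^N$); (ii) $\frac{1}{w^2}L_w^*(L_w^* )^t\to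 L^*(L^* )^t$ as $w\to\infty$.
   Context: For a lattice $\Gamma\subset\mathbb{R}^N$, its dual is $\Gamma^*=\{\mathbf x\in\operatorname{span}(\Gamma):\langle\mathbf x,\mathbf y\rangle\in\mathbb{Z}\ \forall\mathbf y\in\Gamma\}$, where $\operatorname{span}(\Gamma)$ is the real subspace spanned by $\Gamma$. For a nonzero vector $\hat{\mathbf u}\in\mathbb{R}^N$, $P_{\hat{\mathbf u}^\perp}(\mathbf n)=\mathbf n\big(I_N-\frac{\hat{\mathbf u}^t\hat{\mathbf u}}{\hat{\mathbf u}\hat{\mathbf u}^t}\big)$ (row vectors) is the orthogonal projection onto the hyperplane orthogonal to $\hat{\mathbf u}$; $P_{\hat{\mathbf u}^\perp}(\Lambda_{\mathbf c})$ denotes the image of $\Lambda_{\mathbf c}$ under this projection (a lattice in $\hat{\mathbf u}^\perp$ for $\hat{\mathbf u}$ of the given form). $\lfloor\cdot\rfloor$ is the floor function. *)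

From Stdlib Require Import Reals ZArith Lra Lia.
Open Scope R_scope.

(* Vectors of R^n are represented as functions nat -> R, of which only the
   coordinates 1..n are meaningful; all notions below only inspect the
   coordinates 1..n. Matrices are functions nat -> nat -> R (row, column),
   1-based. *)
Definition vec := nat -> R.

Fixpoint sum1 (n : nat) (f : nat -> R) : R :=
  match n with
  | O => 0
  | S m => sum1 m f + f (S m)
  end.

Definition dot (n : nat) (x y : vec) : R := sum1 n (fun k => x k * y k).

Definition floor (x : R) : Z := Int_part x.

Definition lat_gen (n m : nat) (B : nat -> vec) (x : vec) : Prop :=
  exists z : nat -> Z,
    forall k, (1 <= k <= n)%nat -> x k = sum1 m (fun i => IZR (z i) * B i k).

Definition in_span (n : nat) (G : vec -> Prop) (x : vec) : Prop :=
  exists (m : nat) (a : nat -> R) (g : nat -> vec),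
    (forall i, G (g i)) /\
    forall k, (1 <= k <= n)%nat -> x k = sum1 m (fun i => a i * g i k).

Definition dual (n : nat) (G : vec -> Prop) (x : vec) : Prop :=
  in_span n G x /\ forall y, G y -> exists z : Z, dot n x y = IZR z.

Definition proj_perp (n : nat) (u v : vec) : vec :=
  fun k => v k - dot n v u / dot n u u * u k.

Definition proj_img (n : nat) (u : vec) (G : vec -> Prop) (x : vec) : Prop :=
  exists v, G v /\ forall k, (1 <= k <= n)%nat -> x k = proj_perp n u v k.

Definition set_eq (P Q : vec -> Prop) : Prop := forall x, P x <-> Q x.

Definition Lambda_c_basis (c : nat -> R) : nat -> vec :=
  fun i k => if Nat.eqb k i then c i else 0.

Definition Lw (c : nat -> R) (Ls : nat -> nat -> R) (w : nat) : nat -> vec :=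
  fun i j =>
    if Nat.leb j i then IZR (floor (INR w * c j * Ls i j)) / c j
    else if Nat.eqb j (S i) then 1 / c (S i)
    else 0.

(* the alternative generator matrix: row (i-1) is -u_i e_1 + (1/c_i) e_i,
   i = 2..N; i.e. row r (r = 1..N-1) is -u_{r+1} e_1 + (1/c_{r+1}) e_{r+1} *)
Definition Umat (c : nat -> R) (u : nat -> Z) : nat -> vec :=
  fun r k =>
    (if Nat.eqb k 1 then - IZR (u (S r)) else 0)
    + (if Nat.eqb k (S r) then 1 / c (S r) else 0).

From Pilot Require Import Defs.
From Stdlib Require Import Reals ZArith Lra Lia.
Open Scope R_scope.

(* Fix integers u_2, ..., u_N and put uhat = (1, u_2 c_2, ..., u_N c_N).  The
   dual of the projection of Lambda_c onto uhat^perp is the lattice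
     int_perp = { x | x_k c_k is an integer for all k, and <x, uhat> = 0 },
   because pairing x in uhat^perp with a projected vector P(v) is the same as
   pairing it with v (Lemma [dual_proj_eq]).

   Both generator matrices are "staircase": row r ends in column r+1 with the
   entry 1/c_(r+1).  Staircase rows lying in int_perp generate all of int_perp,
   by peeling off the last nonzero coordinate of a vector (Lemma
   [staircase_lat_gen_eq]).  The rows of Umat lie in int_perp for any u, and
   the rows of L_w^* do once u is chosen recursively: u_(r+1) is minus the
   integer contributed to <row r, uhat> by the entries left of the pivot
   (Lemma [Lw_int_perp_exists]).

   For part (ii), |floor(w c l) - w c l| <= 1 shows that L_w^* / w converges
   entrywise to L^* (padded by a zero column) at rate O(1/w); the scaled Gram
   entries are finite sums of products of these, and L^* is lower triangular. *)

Lemma sum1_ext n f g :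
  (forall k, (1 <= k <= n)%nat -> f k = g k) -> sum1 n f = sum1 n g.
Proof.
  induction n as [|n IH]; intros H; simpl; [reflexivity|].
  rewrite IH, H; [reflexivity | lia |]. intros k Hk; apply H; lia.
Qed.

Lemma sum1_plus n f g : sum1 n (fun k => f k + g k) = sum1 n f + sum1 n g.
Proof. induction n as [|n IH]; simpl; [lra | rewrite IH; lra]. Qed.

Lemma sum1_scal n a f : sum1 n (fun k => a * f k) = a * sum1 n f.
Proof. induction n as [|n IH]; simpl; [lra | rewrite IH; lra]. Qed.

Lemma sum1_zero n f : (forall k, (1 <= k <= n)%nat -> f k = 0) -> sum1 n f = 0.
Proof.
  induction n as [|n IH]; intros H; simpl; [reflexivity|].
  rewrite IH, H; [lra | lia |]. intros k Hk; apply H; lia.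
Qed.

Lemma sum1_delta n r f : (1 <= r <= n)%nat ->
  sum1 n (fun i => if Nat.eqb i r then f i else 0) = f r.
Proof.
  induction n as [|n IH]; intros Hr; [lia|]. cbn [sum1].
  destruct (Nat.eqb_spec (S n) r) as [<-|Hne].
  - rewrite sum1_zero; [lra|]. intros k Hk.
    destruct (Nat.eqb_spec k (S n)); [lia | reflexivity].
  - rewrite IH by lia. lra.
Qed.

Lemma sum1_swap n m (f : nat -> nat -> R) :
  sum1 n (fun k => sum1 m (fun i => f i k)) = sum1 m (fun i => sum1 n (fun k => f i k)).
Proof.
  induction n as [|n IH]; simpl.
  - symmetry; apply sum1_zero; reflexivity.
  - rewrite IH, <- sum1_plus. reflexivity.
Qed.

Lemma sum1_trunc n m f : (m <= n)%nat ->
  (forall k, (m < k <= n)%nat -> f k = 0) -> sum1 n f = sum1 m f.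
Proof.
  induction n as [|n IH]; intros Hm H.
  - replace m with 0%nat by lia; reflexivity.
  - destruct (Nat.eq_dec m (S n)) as [->|Hne]; [reflexivity|].
    simpl. rewrite IH, H; [lra | lia | lia |]. intros k Hk; apply H; lia.
Qed.

Lemma sum1_int n f : (forall k, (1 <= k <= n)%nat -> exists z, f k = IZR z) ->
  exists z, sum1 n f = IZR z.
Proof.
  induction n as [|n IH]; simpl; intros H.
  - exists 0%Z; reflexivity.
  - destruct IH as [z1 H1]; [intros k Hk; apply H; lia|].
    destruct (H (S n)) as [z2 H2]; [lia|].
    exists (z1 + z2)%Z. rewrite plus_IZR; lra.
Qed.

Lemma sum1_ge_first n f : (1 <= n)%nat ->
  (forall k, 0 <= f k) -> f 1%nat <= sum1 n f.
Proof.
  induction n as [|n IH]; intros Hn H; [lia|]. cbn [sum1].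
  destruct (Nat.eq_dec n 0) as [->|Hne]; simpl.
  - lra.
  - specialize (IH ltac:(lia) H). specialize (H (S n)). lra.
Qed.

Lemma sum1_cv n (f : nat -> nat -> R) l :
  (forall k, (1 <= k <= n)%nat -> Un_cv (fun w => f w k) (l k)) ->
  Un_cv (fun w => sum1 n (f w)) (sum1 n l).
Proof.
  induction n as [|n IH]; intros H.
  - intros eps Heps. exists 0%nat. intros w _. simpl.
    unfold R_dist. rewrite Rminus_diag, Rabs_R0. exact Heps.
  - cbn [sum1]. apply CV_plus.
    + apply IH. intros k Hk; apply H; lia.
    + apply H; lia.
Qed.

Lemma dot_sym n x y : dot n x y = dot n y x.
Proof. unfold dot; apply sum1_ext; intros; ring. Qed.

Lemma dot_ext n x y y' :
  (forall k, (1 <= k <= n)%nat -> y k = y' k) -> dot n x y = dot n x y'.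
Proof. intros H; unfold dot; apply sum1_ext; intros k Hk; rewrite H by exact Hk; reflexivity. Qed.

Lemma dot_comb n m x (a : nat -> R) (g : nat -> vec) y :
  (forall k, (1 <= k <= n)%nat -> x k = sum1 m (fun i => a i * g i k)) ->
  dot n x y = sum1 m (fun i => a i * dot n (g i) y).
Proof.
  intros H. unfold dot.
  rewrite (sum1_ext n _ (fun k => sum1 m (fun i => a i * (g i k * y k)))).
  - rewrite sum1_swap. apply sum1_ext. intros; apply sum1_scal.
  - intros k Hk. rewrite H by exact Hk. rewrite Rmult_comm, <- sum1_scal.
    apply sum1_ext; intros; ring.
Qed.

Lemma dot_proj_perp n x u v :
  dot n x (proj_perp n u v) = dot n x v - dot n v u / dot n u u * dot n x u.
Proof.
  unfold proj_perp, dot at 1.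
  rewrite (sum1_ext n _ (fun k => x k * v k + (- (dot n v u / dot n u u)) * (x k * u k)))
    by (intros; ring).
  rewrite sum1_plus, sum1_scal. unfold dot. ring.
Qed.

Lemma proj_perp_orth n u v : dot n u u <> 0 -> dot n (proj_perp n u v) u = 0.
Proof. intros Hu. rewrite dot_sym, dot_proj_perp, (dot_sym n u v). field; exact Hu. Qed.

Lemma dot_self_pos n u : (1 <= n)%nat -> u 1%nat = 1 -> 1 <= dot n u u.
Proof.
  intros Hn Hu1. unfold dot.
  replace 1 with (u 1%nat * u 1%nat) by (rewrite Hu1; ring).
  apply (sum1_ge_first n (fun k => u k * u k)); [exact Hn|]. intros; apply Rle_0_sqr.
Qed.

Lemma lat_gen_zero n m B x :
  (forall k, (1 <= k <= n)%nat -> x k = 0) -> lat_gen n m B x.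
Proof.
  intros H. exists (fun _ => 0%Z). intros k Hk. rewrite H by exact Hk.
  symmetry; apply sum1_zero; intros; simpl; ring.
Qed.

Lemma lat_gen_add n m B x' t r x : lat_gen n m B x' -> (1 <= r <= m)%nat ->
  (forall k, (1 <= k <= n)%nat -> x k = x' k + IZR t * B r k) -> lat_gen n m B x.
Proof.
  intros [z Hz] Hr H. exists (fun i => (z i + if Nat.eqb i r then t else 0)%Z).
  intros k Hk. rewrite H, Hz by exact Hk. symmetry.
  rewrite (sum1_ext m _ (fun i => IZR (z i) * B i k
                                  + (if Nat.eqb i r then IZR t * B i k else 0))).
  - rewrite sum1_plus, (sum1_delta m r (fun i => IZR t * B i k)) by exact Hr. reflexivity.
  - intros i Hi. rewrite plus_IZR. destruct (Nat.eqb i r); simpl; ring.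
Qed.

(** The lattice [int_perp N c u]: vectors dual to [Lambda_c] (i.e. [x k * c k]
    integral) lying in the hyperplane orthogonal to [u]. *)
Definition int_perp (N : nat) (c : nat -> R) (u : vec) (x : vec) : Prop :=
  (forall k, (1 <= k <= N)%nat -> exists z, x k * c k = IZR z) /\ dot N x u = 0.

Definition staircase (N : nat) (c : nat -> R) (R : nat -> vec) : Prop :=
  forall r, (1 <= r <= N - 1)%nat ->
    R r (S r) * c (S r) = 1 /\ (forall k, (S r < k <= N)%nat -> R r k = 0).

Section IntPerp.
Variables (N : nat) (c : nat -> R) (u : vec).

Lemma int_perp_sub x y t : int_perp N c u x -> int_perp N c u y ->
  int_perp N c u (fun k => x k - IZR t * y k).
Proof.
  intros [Hx Hxu] [Hy Hyu]. split.
  - intros k Hk. destruct (Hx k Hk) as [a Ha], (Hy k Hk) as [b Hb].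
    exists (a - t * b)%Z. rewrite minus_IZR, mult_IZR, <- Ha, <- Hb. ring.
  - unfold dot in *.
    rewrite (sum1_ext N _ (fun k => x k * u k + (- IZR t) * (y k * u k))) by (intros; ring).
    rewrite sum1_plus, sum1_scal, Hxu, Hyu. ring.
Qed.

Lemma lat_gen_int_perp m B x :
  (forall i, (1 <= i <= m)%nat -> int_perp N c u (B i)) ->
  lat_gen N m B x -> int_perp N c u x.
Proof.
  intros HB [z Hz]. split.
  - intros k Hk. rewrite (Hz k Hk), Rmult_comm, <- sum1_scal.
    apply sum1_int. intros i Hi. destruct (proj1 (HB i Hi) k Hk) as [a Ha].
    exists (z i * a)%Z. rewrite mult_IZR, <- Ha. ring.
  - rewrite (dot_comb N m x (fun i => IZR (z i)) B) by exact Hz.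
    apply sum1_zero. intros i Hi. rewrite (proj2 (HB i Hi)). ring.
Qed.

(* Conversely, staircase rows of [int_perp] generate all of it (when [u 1 = 1]):
   the last nonzero coordinate of [x], say in column [n+2], is an integer multiple
   of the pivot of row [n+1]; subtracting it shortens the support, and a vector of
   [int_perp] supported on the first coordinate vanishes. *)
Lemma int_perp_lat_gen R : (1 <= N)%nat -> u 1%nat = 1 ->
  (forall r, (1 <= r <= N - 1)%nat -> int_perp N c u (R r)) -> staircase N c R ->
  forall x, int_perp N c u x -> lat_gen N (N - 1) R x.
Proof.
  intros HN Hu1 HR Hstair.
  assert (Hsupp : forall n, (n <= N - 1)%nat -> forall x, int_perp N c u x ->
            (forall k, (S n < k <= N)%nat -> x k = 0) -> lat_gen N (N - 1) R x).
  { induction n as [|n IH]; intros Hn x Hx Hx0.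
    - destruct Hx as [_ Hxu]. unfold dot in Hxu.
      rewrite (sum1_trunc N 1) in Hxu; [| lia | intros k Hk; rewrite Hx0 by lia; ring].
      simpl in Hxu. rewrite Hu1 in Hxu.
      apply lat_gen_zero. intros k Hk.
      destruct (Nat.eq_dec k 1) as [->|Hne]; [lra | apply Hx0; lia].
    - destruct (Hstair (S n) ltac:(lia)) as [Hpiv Hzero].
      destruct (proj1 Hx (S (S n))) as [t Ht]; [lia|].
      apply (lat_gen_add N (N - 1) R (fun k => x k - IZR t * R (S n) k) t (S n));
        [| lia | intros; ring].
      apply IH; [lia | apply int_perp_sub; [exact Hx | apply HR; lia] |].
      intros k Hk. destruct (Nat.eq_dec k (S (S n))) as [->|Hne].
      + rewrite <- Ht.
        transitivity (x (S (S n)) * (1 - R (S n) (S (S n)) * c (S (S n)))); [ring|].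
        rewrite Hpiv. ring.
      + rewrite Hx0, Hzero by lia. ring. }
  intros x Hx. apply (Hsupp (N - 1)%nat); [lia | exact Hx | intros; lia].
Qed.

Lemma staircase_lat_gen_eq R : (1 <= N)%nat -> u 1%nat = 1 ->
  (forall r, (1 <= r <= N - 1)%nat -> int_perp N c u (R r)) -> staircase N c R ->
  set_eq (lat_gen N (N - 1) R) (int_perp N c u).
Proof.
  intros HN Hu1 HR Hstair x. split.
  - apply lat_gen_int_perp, HR.
  - apply int_perp_lat_gen; assumption.
Qed.

End IntPerp.

Lemma Lambda_c_basis_mem N c i : lat_gen N N (Lambda_c_basis c) (Lambda_c_basis c i).
Proof.
  destruct (le_lt_dec 1 i); [destruct (le_lt_dec i N)|];
    [| apply lat_gen_zero; intros k Hk; unfold Lambda_c_basis;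
       destruct (Nat.eqb_spec k i); [lia | reflexivity] ..].
  assert (Hi : (1 <= i <= N)%nat) by lia. exists (fun j => if Nat.eqb j i then 1%Z else 0%Z). intros k Hk.
  rewrite (sum1_ext N _ (fun j => if Nat.eqb j i then Lambda_c_basis c j k else 0)).
  - rewrite (sum1_delta N i (fun j => Lambda_c_basis c j k)) by exact Hi. reflexivity.
  - intros j Hj. destruct (Nat.eqb j i); simpl; ring.
Qed.

Lemma Lambda_c_coords N c v : lat_gen N N (Lambda_c_basis c) v ->
  exists z : nat -> Z, forall k, (1 <= k <= N)%nat -> v k = IZR (z k) * c k.
Proof.
  intros [z Hz]. exists z. intros k Hk. rewrite (Hz k Hk).
  rewrite (sum1_ext N _ (fun j => if Nat.eqb j k then IZR (z j) * c j else 0)).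
  - apply sum1_delta; exact Hk.
  - intros j Hj. unfold Lambda_c_basis. rewrite Nat.eqb_sym. destruct (Nat.eqb j k); ring.
Qed.

Lemma dot_Lambda_c_basis N c x i : (1 <= i <= N)%nat ->
  dot N x (Lambda_c_basis c i) = x i * c i.
Proof.
  intros Hi. unfold dot, Lambda_c_basis.
  rewrite (sum1_ext N _ (fun k => if Nat.eqb k i then x k * c k else 0)).
  - apply sum1_delta; exact Hi.
  - intros k Hk. destruct (Nat.eqb_spec k i) as [->|]; ring.
Qed.

Section DualProjection.
Variables (N : nat) (c : nat -> R) (u : vec).
Hypothesis Hc : forall k, (1 <= k <= N)%nat -> c k <> 0.
Hypothesis Hu : dot N u u <> 0.

Let Pu := proj_img N u (lat_gen N N (Lambda_c_basis c)).

(* A dual vector pairs integrally with each projected basis vector [P(c_k e_k)]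
   and lies in their span, hence in [u^perp]. *)
Lemma dual_proj_int_perp x : dual N Pu x -> int_perp N c u x.
Proof.
  intros [[m [a [g [Hg Hx]]]] Hint].
  assert (Hxu : dot N x u = 0).
  { rewrite (dot_comb N m x a g) by exact Hx. apply sum1_zero. intros i Hi.
    destruct (Hg i) as [v [_ Hv]].
    rewrite (dot_sym N (g i)), (dot_ext N u _ _ Hv), dot_sym, proj_perp_orth by exact Hu.
    ring. }
  split; [|exact Hxu].
  intros k Hk. destruct (Hint (proj_perp N u (Lambda_c_basis c k))) as [z Hz].
  - exists (Lambda_c_basis c k). split; [apply Lambda_c_basis_mem | reflexivity].
  - exists z. rewrite <- Hz, dot_proj_perp, dot_Lambda_c_basis, Hxu by exact Hk. ring.
Qed.

(* Conversely [x] in [u^perp] is the combination [sum_k (x_k / c_k) P(c_k e_k)], and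
   pairs with [P v] as with [v], integrally for [v] in [Lambda_c]. *)
Lemma int_perp_dual_proj x : int_perp N c u x -> dual N Pu x.
Proof.
  intros [Hint Hxu]. split.
  - exists N, (fun i => x i / c i), (fun i => proj_perp N u (Lambda_c_basis c i)). split.
    + intros i. exists (Lambda_c_basis c i). split; [apply Lambda_c_basis_mem | reflexivity].
    + intros k Hk.
      rewrite (sum1_ext N _ (fun i => (if Nat.eqb i k then x i else 0)
                                      + (- (u k / dot N u u)) * (x i * u i))).
      * rewrite sum1_plus, sum1_delta, sum1_scal by exact Hk.
        fold (dot N x u). rewrite Hxu. ring.
      * intros i Hi. pose proof (Hc i Hi).
        unfold proj_perp. rewrite (dot_sym N (Lambda_c_basis c i)), dot_Lambda_c_basis by exact Hi.
        unfold Lambda_c_basis. rewrite Nat.eqb_sym.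
        destruct (Nat.eqb_spec i k) as [->|]; field; split; assumption.
  - intros y [v [Hv Hy]]. rewrite (dot_ext N x _ _ Hy), dot_proj_perp, Hxu.
    destruct (Lambda_c_coords N c v Hv) as [z Hz].
    destruct (sum1_int N (fun k => x k * v k)) as [s Hs].
    + intros k Hk. destruct (Hint k Hk) as [a Ha]. exists (a * z k)%Z.
      rewrite (Hz k Hk), mult_IZR, <- Ha. ring.
    + exists s. unfold dot. rewrite Hs. ring.
Qed.

Lemma dual_proj_eq : set_eq (dual N Pu) (int_perp N c u).
Proof. intros x; split; [apply dual_proj_int_perp | apply int_perp_dual_proj]. Qed.

End DualProjection.

Lemma recursive_choice {A : Type} (a0 : A) (P : (nat -> A) -> nat -> A -> Prop) :
  (forall u u' r a, (forall k, (k <= r)%nat -> u k = u' k) -> P u r a -> P u' r a) ->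
  (forall u r, exists a, P u r a) ->
  forall n, exists u : nat -> A, forall r, (1 <= r <= n)%nat -> P u r (u (S r)).
Proof.
  intros Hloc Hex n. induction n as [|n [u Hu]].
  - exists (fun _ => a0). intros; lia.
  - destruct (Hex u (S n)) as [a Ha].
    exists (fun k => if Nat.eqb k (S (S n)) then a else u k). intros r Hr.
    assert (Hagree : forall k, (k <= r)%nat ->
              u k = (if Nat.eqb k (S (S n)) then a else u k)).
    { intros k Hk. destruct (Nat.eqb_spec k (S (S n))); [lia | reflexivity]. }
    destruct (Nat.eq_dec r (S n)) as [->|Hne].
    + rewrite Nat.eqb_refl. exact (Hloc _ _ _ _ Hagree Ha).
    + destruct (Nat.eqb_spec (S r) (S (S n))); [lia|].
      exact (Hloc _ _ _ _ Hagree (Hu r ltac:(lia))).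
Qed.

Definition uhat_of (c : nat -> R) (u : nat -> Z) : vec :=
  fun k => if Nat.eqb k 1 then 1 else IZR (u k) * c k.

Section GeneratorMatrices.
Variables (N : nat) (c : nat -> R).
Hypothesis HN : (2 <= N)%nat.
Hypothesis Hc1 : c 1%nat = 1.
Hypothesis Hc : forall k, (1 <= k <= N)%nat -> c k <> 0.

Section Lw.
Variables (Ls : nat -> nat -> R) (w : nat).

Lemma Lw_staircase : staircase N c (Lw c Ls w).
Proof.
  intros r Hr. unfold Lw. split.
  - replace (Nat.leb (S r) r) with false by (symmetry; apply Nat.leb_gt; lia).
    rewrite Nat.eqb_refl. field. apply Hc; lia.
  - intros k Hk. destruct (Nat.leb_spec k r); [lia|].
    destruct (Nat.eqb_spec k (S r)); [lia | reflexivity].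
Qed.

Lemma Lw_dual_Lambda_c r k : (1 <= k <= N)%nat -> exists z, Lw c Ls w r k * c k = IZR z.
Proof.
  intros Hk. unfold Lw. destruct (Nat.leb k r); [|destruct (Nat.eqb_spec k (S r)) as [->|]].
  - exists (Defs.floor (INR w * c k * Ls r k)). field. apply Hc; exact Hk.
  - exists 1%Z. field. apply Hc; exact Hk.
  - exists 0%Z. ring.
Qed.

Lemma Lw_uhat_int u r k : (1 <= k <= r)%nat -> (r <= N - 1)%nat ->
  exists z, Lw c Ls w r k * uhat_of c u k = IZR z.
Proof.
  intros Hk Hr. unfold Lw, uhat_of. destruct (Nat.leb_spec k r); [|lia].
  destruct (Nat.eqb_spec k 1) as [->|].
  - exists (Defs.floor (INR w * c 1%nat * Ls r 1%nat)). rewrite Hc1. field.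
  - exists (Defs.floor (INR w * c k * Ls r k) * u k)%Z. rewrite mult_IZR. field. apply Hc; lia.
Qed.

Lemma Lw_dot_uhat u r : (1 <= r <= N - 1)%nat ->
  dot N (Lw c Ls w r) (uhat_of c u)
  = sum1 r (fun k => Lw c Ls w r k * uhat_of c u k) + IZR (u (S r)).
Proof.
  intros Hr. destruct (Lw_staircase r Hr) as [Hpiv Hzero].
  unfold dot. rewrite (sum1_trunc N (S r)); [| lia | intros k Hk; rewrite Hzero by exact Hk; ring].
  cbn [sum1]. f_equal. unfold uhat_of.
  destruct (Nat.eqb_spec (S r) 1); [lia|].
  transitivity (IZR (u (S r)) * (Lw c Ls w r (S r) * c (S r))); [ring|].
  rewrite Hpiv. ring.
Qed.

(* Hence [u] can be chosen recursively so that all rows of [L_w^*] are orthogonal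
   to [uhat]: [u_(r+1)] cancels the integer contributed by the first [r] entries. *)
Lemma Lw_int_perp_exists : exists u : nat -> Z,
  forall r, (1 <= r <= N - 1)%nat -> int_perp N c (uhat_of c u) (Lw c Ls w r).
Proof.
  destruct (recursive_choice 0%Z
    (fun u r z => (r <= N - 1)%nat ->
                  sum1 r (fun k => Lw c Ls w r k * uhat_of c u k) + IZR z = 0))
    with (n := (N - 1)%nat) as [u Hu].
  - intros u u' r z Hagree H Hr. rewrite <- (H Hr). f_equal.
    apply sum1_ext. intros k Hk. unfold uhat_of. rewrite (Hagree k) by lia. reflexivity.
  - intros u r. destruct (le_lt_dec r (N - 1)) as [Hr|Hr].
    + destruct (sum1_int r (fun k => Lw c Ls w r k * uhat_of c u k)) as [s Hs].
      * intros k Hk. apply Lw_uhat_int; lia.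
      * exists (- s)%Z. intros _. rewrite Hs, opp_IZR. ring.
    + exists 0%Z. intros; lia.
  - exists u. intros r Hr. split.
    + intros k Hk. apply Lw_dual_Lambda_c; exact Hk.
    + rewrite Lw_dot_uhat by exact Hr. apply Hu; lia.
Qed.

End Lw.

Lemma Umat_staircase u : staircase N c (Umat c u).
Proof.
  intros r Hr. unfold Umat. split.
  - destruct (Nat.eqb_spec (S r) 1); [lia|]. rewrite Nat.eqb_refl. field. apply Hc; lia.
  - intros k Hk. destruct (Nat.eqb_spec k 1); [lia|].
    destruct (Nat.eqb_spec k (S r)); [lia | ring].
Qed.

Lemma Umat_int_perp u r : (1 <= r <= N - 1)%nat -> int_perp N c (uhat_of c u) (Umat c u r).
Proof.
  intros Hr. split.
  - intros k Hk. unfold Umat.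
    destruct (Nat.eqb_spec k 1), (Nat.eqb_spec k (S r)); try lia; try subst k.
    + exists (- u (S r))%Z. rewrite Hc1, opp_IZR. ring.
    + exists 1%Z. field. apply Hc; lia.
    + exists 0%Z. ring.
  - unfold dot.
    rewrite (sum1_ext N _ (fun k => (if Nat.eqb k 1 then - IZR (u (S r)) else 0)
               + (if Nat.eqb k (S r) then 1 / c k * (IZR (u k) * c k) else 0))).
    + rewrite sum1_plus, sum1_delta, sum1_delta by lia. field. apply Hc; lia.
    + intros k Hk. unfold Umat, uhat_of.
      destruct (Nat.eqb_spec k 1); destruct (Nat.eqb_spec k (S r)); try lia; subst; ring.
Qed.

Lemma Lw_generates_projection_dual Ls w : exists u : nat -> Z,
  set_eq (lat_gen N (N - 1) (Lw c Ls w))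
         (dual N (proj_img N (uhat_of c u) (lat_gen N N (Lambda_c_basis c)))) /\
  set_eq (lat_gen N (N - 1) (Lw c Ls w)) (lat_gen N (N - 1) (Umat c u)).
Proof.
  destruct (Lw_int_perp_exists Ls w) as [u Hu]. exists u.
  assert (Hu1 : uhat_of c u 1%nat = 1) by reflexivity.
  assert (Huu : dot N (uhat_of c u) (uhat_of c u) <> 0)
    by (pose proof (dot_self_pos N _ ltac:(lia) Hu1); lra).
  pose proof (staircase_lat_gen_eq N c _ _ ltac:(lia) Hu1 Hu (Lw_staircase Ls w)) as HL.
  pose proof (staircase_lat_gen_eq N c _ _ ltac:(lia) Hu1 (Umat_int_perp u) (Umat_staircase u))
    as HU.
  pose proof (dual_proj_eq N c _ Hc Huu) as HD.
  split; intros x; specialize (HL x); [specialize (HD x) | specialize (HU x)]; tauto.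
Qed.

End GeneratorMatrices.

Lemma Un_cv_rate (a : nat -> R) l K :
  (forall n, (1 <= n)%nat -> Rabs (a n - l) <= K / INR n) -> Un_cv a l.
Proof.
  intros H eps Heps.
  assert (Heps' : 0 < eps / (Rabs K + 1))
    by (apply Rdiv_lt_0_compat; [exact Heps | pose proof (Rabs_pos K); lra]).
  destruct (archimed_cor1 _ Heps') as [M [HM HM0]].
  exists M. intros n Hn. unfold R_dist.
  assert (HMpos : 0 < INR M) by (apply lt_0_INR; exact HM0).
  assert (Hinv : / INR n <= / INR M) by (apply Rinv_le_contravar; [exact HMpos | apply le_INR; exact Hn]).
  assert (Hinvpos : 0 < / INR n) by (apply Rinv_0_lt_compat; apply lt_0_INR; lia).
  assert (HMb : / INR M * (Rabs K + 1) < eps).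
  { apply (Rmult_lt_compat_r (Rabs K + 1)) in HM; [| pose proof (Rabs_pos K); lra].
    unfold Rdiv in HM. rewrite Rmult_assoc, Rinv_l, Rmult_1_r in HM by (pose proof (Rabs_pos K); lra).
    exact HM. }
  eapply Rle_lt_trans; [apply H; lia|]. unfold Rdiv.
  pose proof (Rle_abs K). pose proof (Rabs_pos K). nra.
Qed.

Lemma Un_cv_ext_pos (a b : nat -> R) l :
  (forall n, (1 <= n)%nat -> a n = b n) -> Un_cv b l -> Un_cv a l.
Proof.
  intros H Hb eps Heps. destruct (Hb eps Heps) as [M HM].
  exists (S M). intros n Hn. rewrite H by lia. apply HM; lia.
Qed.

Definition Ls_pad (Ls : nat -> nat -> R) (i k : nat) : R :=
  if Nat.leb k i then Ls i k else 0.

(* Entrywise, [L_w^* / w] converges to [L^*] at rate [O(1/w)], since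
   [|floor(w c l) - w c l| <= 1] and the superdiagonal entries are constant. *)
Lemma Lw_scaled_cv c Ls i k : 0 < c k ->
  Un_cv (fun w => Lw c Ls w i k / INR w) (Ls_pad Ls i k).
Proof.
  intros Hc. apply (Un_cv_rate _ _ (1 / c k)). intros n Hn.
  assert (Hw : 0 < INR n) by (apply lt_0_INR; lia).
  unfold Lw, Ls_pad. destruct (Nat.leb k i).
  - destruct (base_Int_part (INR n * c k * Ls i k)) as [Hfl1 Hfl2].
    unfold Defs.floor. set (F := IZR (Int_part (INR n * c k * Ls i k))) in *.
    replace (F / c k / INR n - Ls i k) with ((F - INR n * c k * Ls i k) * / (c k * INR n))
      by (field; lra).
    replace (1 / c k / INR n) with (1 * / (c k * INR n)) by (field; lra).
    assert (Hpos : 0 < / (c k * INR n)) by (apply Rinv_0_lt_compat, Rmult_lt_0_compat; lra).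
    rewrite Rabs_mult, (Rabs_pos_eq (/ (c k * INR n))) by lra.
    apply Rmult_le_compat_r; [lra | apply Rabs_le; lra].
  - assert (H0 : 0 <= 1 / c k / INR n)
      by (unfold Rdiv; rewrite Rmult_1_l; left; apply Rmult_lt_0_compat; apply Rinv_0_lt_compat; lra).
    destruct (Nat.eqb_spec k (S i)) as [<-|].
    + rewrite Rminus_0_r, Rabs_pos_eq; [lra | exact H0].
    + unfold Rdiv at 1. rewrite Rmult_0_l, Rminus_0_r, Rabs_R0. exact H0.
Qed.

Lemma dot_Ls_pad N Ls i j : (1 <= i <= N - 1)%nat -> (1 <= j <= N - 1)%nat ->
  (forall i j, (1 <= i)%nat -> (i < j)%nat -> (j <= N - 1)%nat -> Ls i j = 0) ->
  dot N (Ls_pad Ls i) (Ls_pad Ls j) = dot (N - 1) (Ls i) (Ls j).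
Proof.
  intros Hi Hj Htri. unfold dot.
  rewrite (sum1_trunc N (N - 1)); [| lia |].
  - apply sum1_ext. intros k Hk. unfold Ls_pad.
    destruct (Nat.leb_spec k i), (Nat.leb_spec k j); try reflexivity;
      rewrite ?(Htri i k), ?(Htri j k) by lia; ring.
  - intros k Hk. unfold Ls_pad.
    destruct (Nat.leb_spec k i); [lia|]. ring.
Qed.

Lemma scaled_gram_cv N c Ls : (forall k, (1 <= k <= N)%nat -> 0 < c k) ->
  (forall i j, (1 <= i)%nat -> (i < j)%nat -> (j <= N - 1)%nat -> Ls i j = 0) ->
  forall i j, (1 <= i <= N - 1)%nat -> (1 <= j <= N - 1)%nat ->
    Un_cv (fun w : nat => / (INR w ^ 2) * dot N (Lw c Ls w i) (Lw c Ls w j))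
          (dot (N - 1) (Ls i) (Ls j)).
Proof.
  intros Hc Htri i j Hi Hj. rewrite <- (dot_Ls_pad N Ls i j Hi Hj Htri).
  apply (Un_cv_ext_pos _
           (fun w => sum1 N (fun k => Lw c Ls w i k / INR w * (Lw c Ls w j k / INR w)))).
  - intros n Hn. assert (0 < INR n) by (apply lt_0_INR; lia).
    unfold dot. rewrite <- sum1_scal. apply sum1_ext. intros; field. lra.
  - apply (sum1_cv N (fun w k => Lw c Ls w i k / INR w * (Lw c Ls w j k / INR w))).
    intros k Hk. apply CV_mult; apply Lw_scaled_cv, Hc; exact Hk.
Qed.

Theorem theorem1
  (N : nat) (HN : (2 <= N)%nat)
  (c : nat -> R) (Hc1 : c 1%nat = 1)
  (Hcpos : forall j, (2 <= j <= N)%nat -> 0 < c j)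
  (B : nat -> nat -> R)
  (HB : forall a : nat -> R,
      (forall k, (1 <= k <= N - 1)%nat -> sum1 (N - 1) (fun i => a i * B i k) = 0) ->
      forall i, (1 <= i <= N - 1)%nat -> a i = 0)
  (Ls : nat -> nat -> R)
  (HLs_tri : forall i j, (1 <= i)%nat -> (i < j)%nat -> (j <= N - 1)%nat -> Ls i j = 0)
  (HLs_gen : set_eq (lat_gen (N - 1) (N - 1) Ls)
                    (dual (N - 1) (lat_gen (N - 1) (N - 1) B))) :
  (forall w : nat,
     exists u : nat -> Z,
       let uhat : vec := fun k => if Nat.eqb k 1 then 1 else IZR (u k) * c k in
       set_eq (lat_gen N (N - 1) (Lw c Ls w))
              (dual N (proj_img N uhat (lat_gen N N (Lambda_c_basis c)))) /\
       set_eq (lat_gen N (N - 1) (Lw c Ls w))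
              (lat_gen N (N - 1) (Umat c u)))
  /\
  (forall i j, (1 <= i <= N - 1)%nat -> (1 <= j <= N - 1)%nat ->
     Un_cv (fun w : nat => / (INR w ^ 2) * dot N (Lw c Ls w i) (Lw c Ls w j))
           (dot (N - 1) (Ls i) (Ls j))).
Proof.
  assert (Hc : forall k, (1 <= k <= N)%nat -> 0 < c k).
  { intros k Hk. destruct (Nat.eq_dec k 1) as [->|]; [lra | apply Hcpos; lia]. }
  assert (Hc0 : forall k, (1 <= k <= N)%nat -> c k <> 0)
    by (intros k Hk; specialize (Hc k Hk); lra).
  split.
  - intros w. exact (Lw_generates_projection_dual N c HN Hc1 Hc0 Ls w).
  - exact (scaled_gram_cv N c Ls Hc HLs_tri).
Qed.
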